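(* The line-incompatibility graph of a trivially-perfect graph is a cograph.
   Context: All graphs are finite, simple and undirected. The line-incompatibility graph $\widehat{G}$ of $G$ has one node for each edge of $G$, and two nodes are adjacent iff the corresponding edges are of the form $\{u,v\},\{v,w\}$ with $\{u,w\}\notin E(G)$ (their endpoints induce a path on three vertices in $G$). A graph $G$ is trivially-perfect if for each induced subgraph $H$ of $G$ the number of maximal cliques of $H$ equals the maximum size of an independent set of $H$; equivalently (a known characterization), $G$ contains neither an induced path on four vertices ($P_4$) nor an induced cycle on four vertices ($C_4$). A cograph is a graph with no induced $P_4$. *)

From mathcomp Require Import all_boot all_order.
Set Implicit Arguments. Unset Strict Implicit. Unset Printing Implicit Defensive.

Section Graphs.
Variables (T : finType) (g : rel T).

Definition simple_graph : Prop := symmetric g /\ irreflexive g.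

Definition is_clique (S K : {set T}) : bool :=
  (K \subset S) && [forall x in K, forall y in K, (x != y) ==> g x y].

Definition is_max_clique (S K : {set T}) : bool :=
  is_clique S K && [forall K' : {set T}, (K \proper K') ==> ~~ is_clique S K'].

Definition is_indep (S I : {set T}) : bool :=
  (I \subset S) && [forall x in I, forall y in I, ~~ g x y].

Definition num_max_cliques (S : {set T}) : nat :=
  #|[set K : {set T} | is_max_clique S K]|.

Definition indep_number (S : {set T}) : nat :=
  \max_(I : {set T} | is_indep S I) #|I|.

Definition trivially_perfect : Prop :=
  forall S : {set T}, S != set0 -> num_max_cliques S = indep_number S.

Definition induced_P4 (a b c d : T) : bool :=
  [&& uniq [:: a; b; c; d], g a b, g b c, g c d,
      ~~ g a c, ~~ g b d & ~~ g a d].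

Definition cograph : Prop := forall a b c d : T, ~~ induced_P4 a b c d.

Definition is_edge (A : {set T}) : bool :=
  [exists u, exists v, g u v && (A == [set u; v])].

Definition edge_type := {A : {set T} | is_edge A}.

Definition line_incompat (A B : edge_type) : bool :=
  [exists u, exists v, exists w,
    [&& val A == [set u; v], val B == [set v; w],
        g u v, g v w, u != w & ~~ g u w]].

End Graphs.

From mathcomp Require Import all_boot all_order.
Set Implicit Arguments. Unset Strict Implicit. Unset Printing Implicit Defensive.

(* A trivially perfect graph has no induced P4 or C4: on a walk a-b-c-d without
   the chords ac and bd, the edges ab, bc, cd are three maximal cliques while
   every independent set meets each of the edges ab and cd at most once.
   Now let A-B-C-D be an induced P4 of the line-incompatibility graph.  Two
   consecutive incompatible pairs share an edge, and the two induced P3s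
   witnessing them must have the same centre: otherwise they glue into a
   chordless walk on four vertices.  So A, B, C, D form a star at a vertex x,
   and star edges xu, xv are compatible exactly when uv is an edge of G.  The
   leaves of A, B, C, D therefore span an induced P4 of G (in the order C, A,
   D, B), which is impossible. *)

Section LineIncompatibility.
Variables (T : finType) (g : rel T).
Hypotheses (g_sym : symmetric g) (g_irr : irreflexive g).

Lemma edge_neq x y : g x y -> x != y.
Proof. by apply: contraTneq => ->; rewrite g_irr. Qed.

Lemma is_max_clique_edge (S : {set T}) x y :
  x \in S -> y \in S -> g x y ->
  (forall z, z \in S -> ~~ (g z x && g z y)) -> is_max_clique g S [set x; y].
Proof.
move=> xS yS gxy no_common; apply/andP; split.
  apply/andP; split.
    by apply/subsetP => z; rewrite !inE => /orP[]/eqP->.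
  apply/forallP => u; apply/implyP; rewrite !inE => /orP[]/eqP->;
  apply/forallP => v; apply/implyP; rewrite !inE => /orP[]/eqP->;
  by rewrite ?eqxx ?gxy ?implybT // g_sym gxy implybT.
apply/forallP => K; apply/implyP => /properP[sub_xyK [z zK z_xy]].
apply/negP => /andP[/subsetP KS /forallP cliqueK].
have xK : x \in K by apply: (subsetP sub_xyK); rewrite !inE eqxx.
have yK : y \in K by apply: (subsetP sub_xyK); rewrite !inE eqxx orbT.
have zx : z != x by apply: contraNneq z_xy => ->; rewrite !inE eqxx.
have zy : z != y by apply: contraNneq z_xy => ->; rewrite !inE eqxx orbT.
have /forallP cliquez := implyP (cliqueK z) zK.
have gzx := implyP (implyP (cliquez x) xK) zx.
have gzy := implyP (implyP (cliquez y) yK) zy.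
by move: (no_common z (KS z zK)); rewrite gzx gzy.
Qed.

Lemma card_indep_setI_edge (S I : {set T}) u v :
  is_indep g S I -> g u v -> #|I :&: [set u; v]| <= 1.
Proof.
case/andP=> _ /forallP indI guv.
have nadjI x y : x \in I -> y \in I -> ~~ g x y.
  by move=> xI yI; apply: (implyP (forallP (implyP (indI x) xI) y) yI).
have [uI | uNI] := boolP (u \in I).
  rewrite -(cards1 u) subset_leq_card //; apply/subsetP => z.
  rewrite !inE andbC => /andP[/orP[]/eqP-> vI] //.
  by move: (nadjI u v uI vI); rewrite guv.
rewrite -(cards1 v) subset_leq_card //; apply/subsetP => z.
rewrite !inE andbC => /andP[/orP[]/eqP-> //].
by rewrite (negbTE uNI).
Qed.

Lemma indep_number_two_edges a b c d :
  g a b -> g c d -> indep_number g ([set a; b] :|: [set c; d]) <= 2.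
Proof.
move=> gab gcd; apply/bigmax_leqP => I indI.
have -> : I = (I :&: [set a; b]) :|: (I :&: [set c; d]).
  by rewrite -setIUr; apply/esym/setIidPl; case/andP: indI.
apply: leq_trans (leq_card_setU _ _) _.
by rewrite -[2]/(1 + 1) leq_add ?(card_indep_setI_edge indI).
Qed.

Lemma trivially_perfect_chord a b c d : trivially_perfect g ->
  g a b -> g b c -> g c d -> a != c -> b != d -> g a c || g b d.
Proof.
move=> tp gab gbc gcd neq_ac neq_bd; apply/negPn/negP.
rewrite negb_or => /andP[/negbTE nac /negbTE nbd].
have nca : g c a = false by rewrite g_sym.
have ndb : g d b = false by rewrite g_sym.
have neq_ad : a != d by apply: contraFneq nca => ->.
have [neq_ab neq_bc] := (edge_neq gab, edge_neq gbc).
set S := [set a; b] :|: [set c; d].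
have S0 : S != set0 by apply/set0Pn; exists a; rewrite !inE eqxx.
have max_cliques K : K \in [:: [set a; b]; [set b; c]; [set c; d]] ->
                     K \in [set K | is_max_clique g S K].
  rewrite !inE => /or3P[]/eqP->;
  apply: is_max_clique_edge; rewrite /S ?inE ?eqxx ?orbT //;
  by move=> z; rewrite /S !inE => /orP[]/orP[]/eqP->;
     rewrite ?g_irr ?nac ?nbd ?nca ?ndb ?andbF.
have uniq_cliques : uniq [:: [set a; b]; [set b; c]; [set c; d]].
  rewrite /= !inE !andbT; apply/andP; split; last first.
    apply/negP => /eqP/setP/(_ b).
    by rewrite !inE eqxx (negbTE neq_bc) (negbTE neq_bd).
  by apply/negP => /orP[]/eqP/setP/(_ a);
     rewrite !inE eqxx ?(negbTE neq_ab) (negbTE neq_ac) ?(negbTE neq_ad).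
have : 3 <= num_max_cliques g S.
  rewrite /num_max_cliques cardE (uniq_leq_size uniq_cliques) // => K.
  by move/max_cliques; rewrite mem_enum.
by rewrite tp // leqNgt ltnS indep_number_two_edges.
Qed.

Definition induced_P3 (u v w : T) : bool :=
  [&& g u v, g v w, u != w & ~~ g u w].

Lemma line_incompatP (A B : edge_type g) :
  reflect (exists u v w,
             [/\ val A = [set u; v], val B = [set v; w] & induced_P3 u v w])
          (line_incompat A B).
Proof.
apply: (iffP existsP) => [[u /existsP[v /existsP[w]]] | [u [v [w [vA vB P3]]]]].
  by case/and3P=> /eqP vA /eqP vB P3; exists u, v, w.
by exists u; apply/existsP; exists v; apply/existsP; exists w; rewrite vA vB !eqxx.
Qed.

Lemma induced_P3_same_center p x y t s r : trivially_perfect g ->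
  induced_P3 p x y -> induced_P3 t s r -> [set x; y] = [set t; s] ->
  s = x /\ t = y.
Proof.
move=> tp /and4P[gpx gxy neq_py npy] /and4P[gts gsr neq_tr ntr] xy_ts.
have neq_ts := edge_neq gts.
have sxy : s \in [set x; y] by rewrite xy_ts !inE eqxx orbT.
have txy : t \in [set x; y] by rewrite xy_ts !inE eqxx.
move: sxy txy; rewrite !inE => /orP[]/eqP ? /orP[]/eqP ?; subst s t;
  rewrite ?eqxx // in neq_ts.
have := trivially_perfect_chord tp gpx gxy gsr neq_py neq_tr.
by rewrite (negbTE npy) (negbTE ntr).
Qed.

Lemma line_compat_adj (A B : edge_type g) a x c :
  val A = [set a; x] -> val B = [set x; c] -> g a x -> g x c ->
  A != B -> ~~ line_incompat A B -> g a c.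
Proof.
move=> vA vB gax gxc neq_AB compat_AB; apply/negPn/negP => nac.
have [eq_ac | neq_ac] := eqVneq a c.
  move: neq_AB; rewrite (_ : A = B) ?eqxx //.
  by apply: val_inj; rewrite vA vB eq_ac setUC.
move/negP: compat_AB; apply; apply/line_incompatP; exists a, x, c.
by rewrite /induced_P3 gax gxc neq_ac nac.
Qed.

End LineIncompatibility.

Theorem theorem12 (T : finType) (g : rel T) :
  simple_graph g -> trivially_perfect g -> cograph (@line_incompat T g).
Proof.
move=> [g_sym g_irr] tp A B C D; apply/negP.
case/and4P=> uniqABCD /line_incompatP[p [x [y [vA vB P3A]]]].
case/line_incompatP=> [t [s [y2 [vB' vC P3C]]]].
case/and4P=> /line_incompatP[t' [s' [y3 [vC' vD P3D]]]] compat_AC compat_BD compat_AD.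
have [? ?] := induced_P3_same_center g_sym g_irr tp P3A P3C (etrans (esym vB) vB').
subst s t.
have [? ?] := induced_P3_same_center g_sym g_irr tp P3C P3D (etrans (esym vC) vC').
subst s' t'.
move: uniqABCD; rewrite /= !inE !negb_or !andbT.
case/and3P=> /and3P[_ neq_AC neq_AD] /andP[_ neq_BD] _.
case/and4P: P3A => gpx gxy neq_py npy.
case/and4P: P3C => _ gxy2 _ _.
case/and4P: P3D => _ gxy3 neq_y2y3 ny2y3.
have gyx : g y x by rewrite g_sym.
have gy2p : g y2 p by rewrite g_sym (line_compat_adj vA vC gpx gxy2 neq_AC compat_AC).
have gpy3 : g p y3 := line_compat_adj vA vD gpx gxy3 neq_AD compat_AD.
have gy3y : g y3 y by rewrite g_sym (line_compat_adj vB' vD gyx gxy3 neq_BD compat_BD).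
have := trivially_perfect_chord g_sym g_irr tp gy2p gpy3 gy3y neq_y2y3 neq_py.
by rewrite (negbTE ny2y3) (negbTE npy).
Qed.
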